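(* Let $N\ge1$, let $G\subseteq\mathrm{GL}_2(\mathbb{Z}/N\mathbb{Z})$ be a subgroup with $-I\in G$ and $\det(G)=(\mathbb{Z}/N\mathbb{Z})^\times$, and let $k$ be a perfect field of characteristic not dividing $N$. Take $j\in k$ and an elliptic curve $E$ over $k$ with $j_E=j$. Let $M$ be the set of group isomorphisms $E[N]\to(\mathbb{Z}/N\mathbb{Z})^2$, with $G$ acting on the left and $\mathrm{Aut}(E_{\bar k})$ on the right by composition, and $\mathrm{Gal}_k$ acting by $(\sigma,\alpha)\mapsto\alpha\circ\sigma^{-1}$. Then the set $\{P\in Y_G(k):\pi_G(P)=j\}$ has the same cardinality as the subset of $G\backslash M/\mathrm{Aut}(E_{\bar k})$ fixed by the action of $\mathrm{Gal}_k$.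
   Context: $\mathrm{Gal}_k=\mathrm{Gal}(\bar k/k)$; for $\sigma\in\mathrm{Gal}_k$, $\sigma^{-1}$ acts on $E[N]\subseteq E(\bar k)$ by $P\mapsto\sigma^{-1}(P)$. $Y_G$ is the $\mathbb{Z}[1/N]$-scheme which is the coarse moduli space of the Deligne–Rapoport stack $\mathscr{M}^\circ_G[1/N]$ of elliptic curves with $G$-level structure: $Y_G(\bar k)$ is the set of isomorphism classes of pairs $(E,[\alpha]_G)$ with $E/\bar k$ an elliptic curve and $[\alpha]_G$ the orbit under $\alpha\mapsto g\circ\alpha$ ($g\in G$) of an isomorphism $\alpha\colon E[N]\to(\mathbb{Z}/N\mathbb{Z})^2$, two pairs being isomorphic if there is an isomorphism $\phi\colon E\to E'$ with $[\alpha]_G=[\alpha'\circ\phi]_G$. $\mathrm{Gal}_k$ acts by $\sigma\cdot(E,[\alpha]_G)=(E^\sigma,[\alpha\circ\sigma^{-1}]_G)$ and $Y_G(k)$ is the fixed set. $\pi_G\colon Y_G\to\mathbb{A}^1$ sends the class of $(E,[\alpha]_G)$ to $j_E$. *)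

From HB Require Import structures.
From mathcomp Require Import all_boot all_order all_algebra all_fingroup.
Set Implicit Arguments. Unset Strict Implicit. Unset Printing Implicit Defensive.
Import GRing.Theory.
Local Open Scope ring_scope.

Record wcurve (F : Type) := WC { wa1 : F; wa2 : F; wa3 : F; wa4 : F; wa6 : F }.

Section Weierstrass.
Variable F : fieldType.
Implicit Types (E : wcurve F) (x y : F).

Definition weq E x y : F :=
  y ^+ 2 + wa1 E * x * y + wa3 E * y
  - (x ^+ 3 + wa2 E * x ^+ 2 + wa4 E * x + wa6 E).

Definition wb2 E := wa1 E ^+ 2 + 4%:R * wa2 E.
Definition wb4 E := 2%:R * wa4 E + wa1 E * wa3 E.
Definition wb6 E := wa3 E ^+ 2 + 4%:R * wa6 E.
Definition wb8 E := wa1 E ^+ 2 * wa6 E + 4%:R * wa2 E * wa6 E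
  - wa1 E * wa3 E * wa4 E + wa2 E * wa3 E ^+ 2 - wa4 E ^+ 2.
Definition wc4 E := wb2 E ^+ 2 - 24%:R * wb4 E.
Definition disc E := - wb2 E ^+ 2 * wb8 E - 8%:R * wb4 E ^+ 3
  - 27%:R * wb6 E ^+ 2 + 9%:R * wb2 E * wb4 E * wb6 E.
Definition jinv E := wc4 E ^+ 3 / disc E.

(* points in projective Weierstrass model: None is the point at infinity O *)
Definition oncurve E (P : option (F * F)) : bool :=
  if P is Some (x, y) then weq E x y == 0 else true.

(* the chord-tangent group law (Silverman, III.2.3) *)
Definition wadd E (P Q : option (F * F)) : option (F * F) :=
  match P, Q with
  | None, _ => Q
  | _, None => P
  | Some (x1, y1), Some (x2, y2) =>
    if (x1 == x2) && (y1 + y2 + wa1 E * x2 + wa3 E == 0) then None else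
    let l := if x1 != x2 then (y2 - y1) / (x2 - x1)
             else (3%:R * x1 ^+ 2 + 2%:R * wa2 E * x1 + wa4 E - wa1 E * y1)
                  / (2%:R * y1 + wa1 E * x1 + wa3 E) in
    let nu := y1 - l * x1 in
    let x3 := l ^+ 2 + wa1 E * l - wa2 E - x1 - x2 in
    Some (x3, - (l + wa1 E) * x3 - nu - wa3 E)
  end.

Definition wmul E (m : nat) (P : option (F * F)) := iter m (wadd E P) None.

Definition in_tors E (N : nat) (P : option (F * F)) : bool :=
  oncurve E P && (wmul E N P == None).

(* Admissible change of variables x = u^2 x' + r, y = u^3 y' + s u^2 x' + t,
   transforming E into E' (the isomorphisms E -> E' of elliptic curves). *)
Definition chvar E E' (u r s t : F) : Prop :=
  u != 0 /\ forall x' y' : F,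
    weq E (u ^+ 2 * x' + r) (u ^+ 3 * y' + s * u ^+ 2 * x' + t)
    = u ^+ 6 * weq E' x' y'.

Definition chvar_pt (u r s t : F) (P : option (F * F)) : option (F * F) :=
  if P is Some (x, y) then
    Some ((x - r) / u ^+ 2, (y - s * (x - r) - t) / u ^+ 3)
  else None.

End Weierstrass.

Definition wmap (F F' : Type) (f : F -> F') (E : wcurve F) : wcurve F' :=
  WC (f (wa1 E)) (f (wa2 E)) (f (wa3 E)) (f (wa4 E)) (f (wa6 E)).
Definition ptmap (F F' : Type) (f : F -> F') (P : option (F * F)) :=
  if P is Some (x, y) then Some (f x, f y) else None.

(* (Z/NZ)^2 as the Z-module 'I_N * 'I_N ;  GL_2(Z/NZ) = Aut((Z/NZ)^2),
   realised as additive permutations of (Z/NZ)^2. *)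
Notation ZN2 n := ('I_n.+1 * 'I_n.+1)%type.

Definition is_GL2 n (g : {perm ZN2 n}) : bool :=
  [forall x : ZN2 n, forall y : ZN2 n, g (x + y) == g x + g y].

Definition e1 n : ZN2 n := (Zp1, 0).
Definition e2 n : ZN2 n := (0, Zp1).

(* determinant of the matrix with columns g e1, g e2, as an element of Z/NZ *)
Definition detN n (g : {perm ZN2 n}) : 'I_n.+1 :=
  let a := nat_of_ord (g (e1 n)).1 in let c := nat_of_ord (g (e1 n)).2 in
  let b := nat_of_ord (g (e2 n)).1 in let d := nat_of_ord (g (e2 n)).2 in
  inZp (a * d + (n.+1 * n.+1 - b * c))%N.

Section Level.
Variables (K : fieldType) (n : nat).

(* beta : (Z/NZ)^2 -> E(K) is the inverse of a group isomorphism
   alpha : E[N] -> (Z/NZ)^2 *)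
Definition levelstr (E : wcurve K) (beta : {ffun ZN2 n -> option (K * K)}) : Prop :=
  injective beta /\
  (forall a b, beta (a + b) = wadd E (beta a) (beta b)) /\
  (forall a, in_tors E n.+1 (beta a)) /\
  (forall P, in_tors E n.+1 P -> exists a, beta a = P).

Variable G : {group {perm ZN2 n}}.

(* (E, [alpha]_G) ~ (E', [alpha']_G) : exists phi : E -> E' with
   [alpha]_G = [alpha' o phi]_G;  in terms of beta = alpha^-1 *)
Definition pair_iso (X Y : wcurve K * {ffun ZN2 n -> option (K * K)}) : Prop :=
  exists u r s t, chvar X.1 Y.1 u r s t /\
    exists2 g, g \in G & forall a, Y.2 a = chvar_pt u r s t (X.2 (g a)).

(* G \ M / Aut(E) : beta ~ beta' ; (alpha |-> h o alpha o v) *)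
Definition dcoset_rel (E : wcurve K) (b b' : {ffun ZN2 n -> option (K * K)}) : Prop :=
  exists u r s t, chvar E E u r s t /\
    exists2 g, g \in G & forall a, b' a = chvar_pt u r s t (b (g a)).
End Level.

Definition perfect_field (k : fieldType) : Prop :=
  (forall p, p \in [pchar k] -> False) \/
  (exists2 p, p \in [pchar k] & forall x : k, exists y : k, y ^+ p = x).

(* Gal(Kbar / k) for an algebraic closure iota : k -> Kbar *)
Definition galk (k : fieldType) (K : fieldType) (iota : k -> K)
  (sigma : {rmorphism K -> K}) : Prop :=
  bijective sigma /\ forall a : k, sigma (iota a) = iota a.

Definition same_card (T1 T2 : Type) (A : T1 -> Prop) (B : T2 -> Prop) : Prop :=
  exists f : {x | A x} -> {y | B y}, bijective f.

From Stdlib Require Import ClassicalEpsilon FunctionalExtensionality PropExtensionality ProofIrrelevance.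
From HB Require Import structures.
From mathcomp Require Import all_boot all_order all_algebra all_fingroup.
From mathcomp Require Import ring.
Set Implicit Arguments. Unset Strict Implicit. Unset Printing Implicit Defensive.
Import GRing.Theory.
Local Open Scope ring_scope.

(* Over the algebraic closure K, an explicit reduction of Weierstrass equations
   to a normal form depending only on the j-invariant shows that every curve X
   with j(X) = j is isomorphic to E.  Transporting a level structure of X along
   such an isomorphism turns the class of (X, [alpha]_G) into a double coset
   G alpha Aut(E); two pairs are isomorphic exactly when their transports differ
   by G on the left and an automorphism of E on the right, and since E is defined
   over k, Galois stability is preserved in both directions. *)

Section GroupLaw.
Variable F : fieldType.
Implicit Types (E : wcurve F) (x y l : F).

Definition wslope E x1 y1 x2 y2 : F :=
  if x1 != x2 then (y2 - y1) / (x2 - x1)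
  else (3%:R * x1 ^+ 2 + 2%:R * wa2 E * x1 + wa4 E - wa1 E * y1)
       / (2%:R * y1 + wa1 E * x1 + wa3 E).

Definition wline_pt E x1 x2 y1 l : F * F :=
  (l ^+ 2 + wa1 E * l - wa2 E - x1 - x2,
   - (l + wa1 E) * (l ^+ 2 + wa1 E * l - wa2 E - x1 - x2) - (y1 - l * x1) - wa3 E).

Lemma wadd_SomeE E x1 y1 x2 y2 :
  wadd E (Some (x1, y1)) (Some (x2, y2)) =
  if (x1 == x2) && (y1 + y2 + wa1 E * x2 + wa3 E == 0) then None
  else Some (wline_pt E x1 x2 y1 (wslope E x1 y1 x2 y2)).
Proof. by []. Qed.

Lemma weq_same_x E x y1 y2 : weq E x y1 = 0 -> weq E x y2 = 0 ->
  y2 = y1 \/ y1 + y2 + wa1 E * x + wa3 E = 0.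
Proof.
move=> h1 h2.
have: (y2 - y1) * (y1 + y2 + wa1 E * x + wa3 E) = 0.
  have -> : (y2 - y1) * (y1 + y2 + wa1 E * x + wa3 E) = weq E x y2 - weq E x y1.
    by rewrite /weq; ring.
  by rewrite h1 h2 subrr.
by move/eqP; rewrite mulf_eq0 => /orP[/eqP/subr0_eq|/eqP]; [left|right].
Qed.

(* With x3 the abscissa of wline_pt, weq E x (l x + nu) + (x - x1)(x - x2)(x - x3)
   is affine in x; it vanishes at x1 and x2 (for a tangent: at x1, with slope 0),
   hence also at x3. *)
Lemma weq_chord E x1 y1 x2 y2 : x1 != x2 ->
  weq E x1 y1 = 0 -> weq E x2 y2 = 0 ->
  let: (x3, y3) := wline_pt E x1 x2 y1 ((y2 - y1) / (x2 - x1)) in weq E x3 y3 = 0.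
Proof.
move=> n12 h1 h2 /=.
set L := (y2 - y1) / (x2 - x1); set nu := y1 - L * x1.
set x3 := L ^+ 2 + wa1 E * L - wa2 E - x1 - x2.
pose f x := weq E x (L * x + nu).
pose h x := f x + (x - x1) * (x - x2) * (x - x3).
have fx1 : f x1 = 0 by rewrite /f /nu -h1; congr weq; ring.
have fx2 : f x2 = 0.
  rewrite /f /nu -h2; congr weq; rewrite /L.
  have hx : x2 - x1 != 0 by rewrite subr_eq0 eq_sym.
  by field.
have -> : weq E x3 (- (L + wa1 E) * x3 - (y1 - L * x1) - wa3 E) = f x3.
  by rewrite /f /weq /nu; ring.
have : (x2 - x1) * h x3 = (x2 - x1) * h x1 + (x3 - x1) * (h x2 - h x1).
  by rewrite /h /f /x3 /nu /weq; ring.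
rewrite /h fx1 fx2 !(subrr, mulr0, mul0r, addr0, add0r, subr0).
by move/eqP; rewrite mulf_eq0 subr_eq0 eq_sym (negPf n12) => /eqP.
Qed.

Lemma weq_tangent E x1 y1 : 2%:R * y1 + wa1 E * x1 + wa3 E != 0 ->
  weq E x1 y1 = 0 ->
  let: (x3, y3) := wline_pt E x1 x1 y1 (wslope E x1 y1 x1 y1) in weq E x3 y3 = 0.
Proof.
move=> d0 h1; rewrite /wslope eqxx /=.
set D := 2%:R * y1 + wa1 E * x1 + wa3 E in d0 *.
set L := (_ / D); set nu := y1 - L * x1.
set x3 := L ^+ 2 + wa1 E * L - wa2 E - x1 - x1.
pose f x := weq E x (L * x + nu).
pose h x := f x + (x - x1) * (x - x1) * (x - x3).
have fx1 : f x1 = 0 by rewrite /f /nu -h1; congr weq; ring.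
have -> : weq E x3 (- (L + wa1 E) * x3 - (y1 - L * x1) - wa3 E) = f x3.
  by rewrite /f /weq /nu; ring.
have hL : wa1 E * y1 - 3%:R * x1 ^+ 2 - 2%:R * wa2 E * x1 - wa4 E + L * D = 0.
  by rewrite /L divfK //; ring.
have : h x3 = h x1
  + (x3 - x1) * (wa1 E * y1 - 3%:R * x1 ^+ 2 - 2%:R * wa2 E * x1 - wa4 E + L * D).
  by rewrite /h /f /x3 /nu /D /weq; ring.
rewrite hL mulr0 addr0 /h fx1 /x3.
by rewrite !(subrr, mulr0, mul0r, addr0) => ->.
Qed.

Lemma oncurve_wadd E P Q : oncurve E P -> oncurve E Q -> oncurve E (wadd E P Q).
Proof.
case: P => [[x1 y1]|] //; case: Q => [[x2 y2]|] // /eqP h1 /eqP h2.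
rewrite wadd_SomeE; case: ifP => // hc /=; apply/eqP.
have [e12|n12] := eqVneq x1 x2; last first.
  by have /= := weq_chord n12 h1 h2; rewrite /wslope n12.
subst x2; rewrite eqxx /= in hc.
have [e|e] := weq_same_x h1 h2; last by rewrite e eqxx in hc.
subst y2; apply: weq_tangent h1.
by rewrite mulr_natl mulr2n hc.
Qed.

Lemma oncurve_wmul E m P : oncurve E P -> oncurve E (wmul E m P).
Proof. by move=> h; elim: m => //= m IH; apply: oncurve_wadd. Qed.

End GroupLaw.

Definition cvar (F : Type) := (F * F * F * F)%type.

Section ChangeOfVariables.
Variable F : fieldType.
Implicit Types (E : wcurve F) (p q : cvar F) (P Q : option (F * F)).

Definition cv_unit p : F := p.1.1.1.
Definition cv_one : cvar F := (1, 0, 0, 0).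
Definition cv_mul p q : cvar F :=
  let: (u1, r1, s1, t1) := p in let: (u2, r2, s2, t2) := q in
  (u1 * u2, r1 + u1 ^+ 2 * r2, s1 + u1 * s2, t1 + u1 ^+ 2 * s1 * r2 + u1 ^+ 3 * t2).
Definition cv_inv p : cvar F :=
  let: (u, r, s, t) := p in (u^-1, - r / u ^+ 2, - s / u, (r * s - t) / u ^+ 3).

(* Silverman, AEC, Table 3.1 *)
Definition cv_curve E p : wcurve F :=
  let: (u, r, s, t) := p in
  WC ((wa1 E + 2%:R * s) / u)
     ((wa2 E - s * wa1 E + 3%:R * r - s ^+ 2) / u ^+ 2)
     ((wa3 E + r * wa1 E + 2%:R * t) / u ^+ 3)
     ((wa4 E - s * wa3 E + 2%:R * r * wa2 E - (t + r * s) * wa1 E + 3%:R * r ^+ 2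
       - 2%:R * s * t) / u ^+ 4)
     ((wa6 E + r * wa4 E + r ^+ 2 * wa2 E + r ^+ 3 - t * wa3 E - t ^+ 2 - r * t * wa1 E)
      / u ^+ 6).

Definition cv_pt p P := let: (u, r, s, t) := p in chvar_pt u r s t P.
Definition cv_iso E E' p := let: (u, r, s, t) := p in chvar E E' u r s t.

Lemma cv_unit_mul p q : cv_unit p != 0 -> cv_unit q != 0 -> cv_unit (cv_mul p q) != 0.
Proof. by case: p => [[[u r] s] t]; case: q => [[[u' r'] s'] t'] /= h h'; rewrite mulf_neq0. Qed.

Lemma cv_unit_inv p : cv_unit p != 0 -> cv_unit (cv_inv p) != 0.
Proof. by case: p => [[[u r] s] t] /= h; rewrite invr_eq0. Qed.

Lemma cv_mulV p : cv_unit p != 0 -> cv_mul p (cv_inv p) = cv_one.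
Proof. by case: p => [[[u r] s] t] /= h; congr (_, _, _, _); field; rewrite h. Qed.

Lemma cv_mulVl p : cv_unit p != 0 -> cv_mul (cv_inv p) p = cv_one.
Proof. by case: p => [[[u r] s] t] /= h; congr (_, _, _, _); field; rewrite h. Qed.

Lemma cv_curve1 E : cv_curve E cv_one = E.
Proof.
by case: E => a1 a2 a3 a4 a6 /=; congr WC; field; rewrite ?oner_neq0.
Qed.

Lemma cv_curve_mul E p q : cv_unit p != 0 -> cv_unit q != 0 ->
  cv_curve (cv_curve E p) q = cv_curve E (cv_mul p q).
Proof.
case: p => [[[u r] s] t]; case: q => [[[u' r'] s'] t'] /= h h'.
by congr WC; field; rewrite h h'.
Qed.

Lemma cv_pt1 P : cv_pt cv_one P = P.
Proof. by case: P => [[x y]|] //=; congr (Some (_, _)); field; rewrite ?oner_neq0. Qed.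

Lemma cv_pt_mul p q P : cv_unit p != 0 -> cv_unit q != 0 ->
  cv_pt q (cv_pt p P) = cv_pt (cv_mul p q) P.
Proof.
case: p => [[[u r] s] t]; case: q => [[[u' r'] s'] t'] /= h h'.
by case: P => [[x y]|] //=; congr (Some (_, _)); field; rewrite h h'.
Qed.

Lemma cv_ptK p : cv_unit p != 0 -> cancel (cv_pt p) (cv_pt (cv_inv p)).
Proof. by move=> h P; rewrite cv_pt_mul ?cv_unit_inv // cv_mulV // cv_pt1. Qed.

Lemma cv_ptVK p : cv_unit p != 0 -> cancel (cv_pt (cv_inv p)) (cv_pt p).
Proof. by move=> h P; rewrite cv_pt_mul ?cv_unit_inv // cv_mulVl // cv_pt1. Qed.

Lemma cv_pt_None p : cv_pt p None = None.
Proof. by case: p => [[[u r] s] t]. Qed.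

Lemma cv_isoP E p : cv_unit p != 0 -> cv_iso E (cv_curve E p) p.
Proof. by case: p => [[[u r] s] t] /= u0; split => // x y; rewrite /weq /=; field. Qed.

Lemma cv_iso_unit E E' p : cv_iso E E' p -> cv_unit p != 0.
Proof. by case: p => [[[u r] s] t] []. Qed.

Lemma oncurve_cv_pt E E' p P : cv_iso E E' p -> oncurve E' (cv_pt p P) = oncurve E P.
Proof.
case: p => [[[u r] s] t] [u0 H]; case: P => [[x y]|] //=.
have := H ((x - r) / u ^+ 2) ((y - s * (x - r) - t) / u ^+ 3).
have -> : u ^+ 2 * ((x - r) / u ^+ 2) + r = x by field.
have -> : u ^+ 3 * ((y - s * (x - r) - t) / u ^+ 3) + s * u ^+ 2 * ((x - r) / u ^+ 2) + t = y.
  by field.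
by move=> ->; rewrite mulf_eq0 expf_eq0 (negPf u0) andbF.
Qed.

Lemma cv_pt_wadd E p P Q : cv_unit p != 0 -> oncurve E P -> oncurve E Q ->
  cv_pt p (wadd E P Q) = wadd (cv_curve E p) (cv_pt p P) (cv_pt p Q).
Proof.
case: p => [[[u r] s] t] /= u0.
case: P => [[x1 y1]|] //; case: Q => [[x2 y2]|] // h1 h2.
move/eqP: h1 => h1; move/eqP: h2 => h2.
pose X x := (x - r) / u ^+ 2; pose Y x y := (y - s * (x - r) - t) / u ^+ 3.
rewrite -/(X x1) -/(X x2) -/(Y x1 y1) -/(Y x2 y2) !wadd_SomeE.
have X_eq : (X x1 == X x2) = (x1 == x2).
  by apply/eqP/eqP => [|->] // /(congr1 (fun x => x * u ^+ 2 + r)); rewrite !divfK ?expf_neq0 // !subrK.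
have line_pt l : wline_pt (cv_curve E (u, r, s, t)) (X x1) (X x2) (Y x1 y1) ((l - s) / u) =
   (X (wline_pt E x1 x2 y1 l).1, Y (wline_pt E x1 x2 y1 l).1 (wline_pt E x1 x2 y1 l).2).
  by rewrite /wline_pt /X /Y /=; congr (_, _); field; rewrite u0.
rewrite X_eq; have [e12|n12] := eqVneq x1 x2 => /=; last first.
  rewrite -line_pt; congr (Some (wline_pt _ _ _ _ _)).
  rewrite /wslope X_eq n12 /=.
  have hx : x2 - x1 != 0 by rewrite subr_eq0 eq_sym.
  have e : x2 - r - (x1 - r) = x2 - x1 by ring.
  by rewrite /X /Y; field; rewrite e hx u0.
subst x2.
have -> : Y x1 y1 + Y x1 y2 + wa1 (cv_curve E (u, r, s, t)) * X x1
          + wa3 (cv_curve E (u, r, s, t)) = (y1 + y2 + wa1 E * x1 + wa3 E) / u ^+ 3.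
  by rewrite /X /Y /=; field; rewrite u0.
rewrite mulf_eq0 invr_eq0 expf_eq0 (negPf u0) andbF orbF.
case: ifP => // hc.
rewrite (surjective_pairing (wline_pt E x1 x1 y1 _)) /= -line_pt.
congr (Some (wline_pt _ _ _ _ _)).
have [e|e] := weq_same_x h1 h2; last by rewrite e eqxx in hc.
subst y2.
have d0 : 2%:R * y1 + wa1 E * x1 + wa3 E != 0 by rewrite mulr_natl mulr2n hc.
rewrite /wslope !eqxx /=.
have -> : 2%:R * Y x1 y1 + wa1 (cv_curve E (u, r, s, t)) * X x1 + wa3 (cv_curve E (u, r, s, t))
    = (2%:R * y1 + wa1 E * x1 + wa3 E) / u ^+ 3.
  by rewrite /X /Y /=; field; rewrite u0.
set D := 2%:R * y1 + wa1 E * x1 + wa3 E in d0 *.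
by rewrite /D /X /Y /=; field; rewrite u0 -/D d0.
Qed.

Lemma wb2_cv_curve E p : cv_unit p != 0 ->
  wb2 (cv_curve E p) = (wb2 E + 12%:R * p.1.1.2) / cv_unit p ^+ 2.
Proof. by case: p => [[[u r] s] t]; rewrite /cv_unit /= => u0; rewrite /wb2 /=; field; rewrite u0. Qed.

Lemma wb4_cv_curve E p : cv_unit p != 0 ->
  wb4 (cv_curve E p) = (wb4 E + p.1.1.2 * wb2 E + 6%:R * p.1.1.2 ^+ 2) / cv_unit p ^+ 4.
Proof. by case: p => [[[u r] s] t]; rewrite /cv_unit /= => u0; rewrite /wb4 /wb2 /=; field; rewrite u0. Qed.

Lemma wc4_cv_curve E p : cv_unit p != 0 -> wc4 (cv_curve E p) = wc4 E / cv_unit p ^+ 4.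
Proof.
move=> u0; rewrite /wc4 wb2_cv_curve // wb4_cv_curve //.
by field; rewrite u0.
Qed.

Lemma disc_cv_curve E p : cv_unit p != 0 -> disc (cv_curve E p) = disc E / cv_unit p ^+ 12.
Proof.
by case: p => [[[u r] s] t]; rewrite /cv_unit /= => u0; rewrite /disc /wb2 /wb4 /wb6 /wb8 /=; field; rewrite u0.
Qed.

Lemma disc_cv_curve_neq0 E p : cv_unit p != 0 -> disc E != 0 -> disc (cv_curve E p) != 0.
Proof. by move=> h d; rewrite disc_cv_curve // mulf_neq0 // invr_eq0 expf_neq0. Qed.

Lemma jinv_cv_curve E p : cv_unit p != 0 -> jinv (cv_curve E p) = jinv E.
Proof.
move=> u0; rewrite /jinv wc4_cv_curve // disc_cv_curve //.
have [->|d0] := eqVneq (disc E) 0; first by rewrite !mul0r !invr0 !mulr0.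
by field; rewrite u0 d0.
Qed.

End ChangeOfVariables.

Arguments cv_one {F}.

Section Isomorphisms.
Variable F : fieldType.
Implicit Types (E : wcurve F) (p q : cvar F) (P Q : option (F * F)).

(* Over F_2 the polynomial function weq E does not determine E. *)
Hypothesis F_gt2 : exists z : F, z != 0 /\ z != 1.

Lemma weq_inj E1 E2 : (forall x y, weq E1 x y = weq E2 x y) -> E1 = E2.
Proof.
case: E1 => a1 a2 a3 a4 a6; case: E2 => b1 b2 b3 b4 b6 H.
pose D x y := weq (WC a1 a2 a3 a4 a6) x y - weq (WC b1 b2 b3 b4 b6) x y.
have HD x y : D x y = 0 by rewrite /D H subrr.
have e6 : a6 = b6.
  apply: subr0_eq; have -> : a6 - b6 = - D 0 0 by rewrite /D /weq /=; ring.
  by rewrite HD oppr0.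
have e3 : a3 = b3.
  apply: subr0_eq; have -> : a3 - b3 = D 0 1 by rewrite /D /weq /= e6; ring.
  by rewrite HD.
have e1 : a1 = b1.
  apply: subr0_eq; have -> : a1 - b1 = D 1 1 - D 1 0 by rewrite /D /weq /= e6 e3; ring.
  by rewrite !HD subrr.
have e24 : a4 - b4 = - (a2 - b2).
  apply: subr0_eq.
  have -> : a4 - b4 - - (a2 - b2) = - D 1 0 by rewrite /D /weq /= e6 e3 e1; ring.
  by rewrite HD oppr0.
have [z [z0 z1]] := F_gt2.
have e2 : a2 = b2.
  have : (a2 - b2) * (z * (z - 1)) = - D z 0.
    rewrite /D /weq /= e6 e3 e1.
    have -> : a4 = b4 - (a2 - b2) by rewrite -e24; ring.
    ring.
  rewrite HD oppr0 => /eqP; rewrite !mulf_eq0 !subr_eq0 (negPf z0) (negPf z1) /= orbF.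
  by move/eqP.
have e4 : a4 = b4 by apply: subr0_eq; rewrite e24 e2 subrr oppr0.
by rewrite e1 e2 e3 e4 e6.
Qed.

Lemma cv_iso_curve E E' p : cv_iso E E' p -> E' = cv_curve E p.
Proof.
move=> hp; have u0 := cv_iso_unit hp; have := cv_isoP E u0.
case: p u0 hp => [[[u r] s] t] /= u0 [_ H] [_ H'].
apply: weq_inj => x y; apply: (mulfI (expf_neq0 6 u0)).
by rewrite -H -H'.
Qed.

Lemma cv_iso1 E : cv_iso E E cv_one.
Proof. by rewrite -{2}(cv_curve1 E); apply: cv_isoP; rewrite /cv_unit /= oner_neq0. Qed.

Lemma cv_iso_mul E1 E2 E3 p q :
  cv_iso E1 E2 p -> cv_iso E2 E3 q -> cv_iso E1 E3 (cv_mul p q).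
Proof.
move=> h1 h2; have u1 := cv_iso_unit h1; have u2 := cv_iso_unit h2.
rewrite (cv_iso_curve h2) (cv_iso_curve h1) cv_curve_mul //.
exact/cv_isoP/cv_unit_mul.
Qed.

Lemma cv_iso_inv E1 E2 p : cv_iso E1 E2 p -> cv_iso E2 E1 (cv_inv p).
Proof.
move=> h; have u0 := cv_iso_unit h.
have -> : E1 = cv_curve E2 (cv_inv p).
  by rewrite (cv_iso_curve h) cv_curve_mul ?cv_unit_inv // cv_mulV // cv_curve1.
exact/cv_isoP/cv_unit_inv.
Qed.

Lemma cv_iso_wadd E E' p P Q : cv_iso E E' p -> oncurve E P -> oncurve E Q ->
  cv_pt p (wadd E P Q) = wadd E' (cv_pt p P) (cv_pt p Q).
Proof. by move=> h; rewrite (cv_iso_curve h); apply/cv_pt_wadd/(cv_iso_unit h). Qed.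

Lemma cv_iso_wmul E E' p m P : cv_iso E E' p -> oncurve E P ->
  cv_pt p (wmul E m P) = wmul E' m (cv_pt p P).
Proof.
move=> h hP; elim: m => [|m IH] /=; first exact: cv_pt_None.
by rewrite (cv_iso_wadd h) ?IH //; apply: oncurve_wmul.
Qed.

Lemma in_tors_cv_pt E E' p N P : cv_iso E E' p -> in_tors E' N (cv_pt p P) = in_tors E N P.
Proof.
move=> h; rewrite /in_tors (oncurve_cv_pt P h).
case hP: (oncurve E P) => //=.
rewrite -(cv_iso_wmul _ h) //; apply/eqP/eqP => [e|->]; last exact: cv_pt_None.
by apply: (can_inj (cv_ptK (cv_iso_unit h))); rewrite e cv_pt_None.
Qed.

End Isomorphisms.

Section BaseChange.
Variables (F F' : fieldType) (f : {rmorphism F -> F'}).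
Implicit Types (E : wcurve F) (p : cvar F).

Definition cv_map p : cvar F' := let: (u, r, s, t) := p in (f u, f r, f s, f t).

Let fE := (fmorph_div, rmorph_nat, rmorphXn, rmorphB, rmorphD, rmorphM, rmorphN, fmorphV).

Lemma wmap_cv_curve E p : wmap f (cv_curve E p) = cv_curve (wmap f E) (cv_map p).
Proof. by case: p => [[[u r] s] t]; rewrite /wmap /=; congr WC; rewrite !fE. Qed.

Lemma ptmap_cv_pt p P : ptmap f (cv_pt p P) = cv_pt (cv_map p) (ptmap f P).
Proof.
by case: p => [[[u r] s] t]; case: P => [[x y]|] //=; congr (Some (_, _)); rewrite !fE.
Qed.

Lemma cv_unit_map p : (cv_unit (cv_map p) != 0) = (cv_unit p != 0).
Proof. by case: p => [[[u r] s] t]; rewrite /cv_unit /= fmorph_eq0. Qed.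

Lemma disc_wmap E : disc (wmap f E) = f (disc E).
Proof. by rewrite /disc /wb2 /wb4 /wb6 /wb8 /wmap /= !fE. Qed.

Lemma jinv_wmap E : jinv (wmap f E) = f (jinv E).
Proof. by rewrite /jinv disc_wmap /wc4 /wb2 /wb4 /wmap /= !fE. Qed.

End BaseChange.

Section ClosedFieldRoots.
Variable K : closedFieldType.

Lemma exists_nth_root n (c : K) : (0 < n)%N -> c != 0 -> exists2 x : K, x ^+ n = c & x != 0.
Proof.
move=> n0 c0; have [x hx] := @solve_monicpoly K n (fun i => if i == 0%N then c else 0) n0.
have {}hx : x ^+ n = c.
  rewrite hx (bigD1 (Ordinal n0)) //= big1 ?addr0 ?expr0 ?mulr1 //.
  by move=> i; rewrite -val_eqE /= => /negPf ->; rewrite mul0r.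
exists x => //; apply: contraNneq c0 => x0.
by rewrite -hx x0 expr0n eqn0Ngt n0.
Qed.

Lemma solve_deg2 (c0 c1 : K) : exists x : K, x ^+ 2 = c0 + c1 * x.
Proof.
have [x hx] := @solve_monicpoly K 2 (nth 0 [:: c0; c1]) isT.
by exists x; rewrite hx !big_ord_recl big_ord0 /= expr0 expr1 mulr1 addr0.
Qed.

Lemma solve_deg3 (c0 c1 c2 : K) : exists x : K, x ^+ 3 = c0 + c1 * x + c2 * x ^+ 2.
Proof.
have [x hx] := @solve_monicpoly K 3 (nth 0 [:: c0; c1; c2]) isT.
by exists x; rewrite hx !big_ord_recl big_ord0 /= expr0 expr1 mulr1 addr0 addrA.
Qed.

Lemma solve_deg4 (c0 c1 c2 c3 : K) :
  exists x : K, x ^+ 4 = c0 + c1 * x + c2 * x ^+ 2 + c3 * x ^+ 3.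
Proof.
have [x hx] := @solve_monicpoly K 4 (nth 0 [:: c0; c1; c2; c3]) isT.
by exists x; rewrite hx !big_ord_recl big_ord0 /= expr0 expr1 mulr1 addr0 !addrA.
Qed.

Lemma closed_field_gt2 : exists z : K, z != 0 /\ z != 1.
Proof.
have [x hx] := solve_deg2 (-1) 1.
exists x; split; apply/eqP => e; move: hx; rewrite e.
- by rewrite expr0n /= mulr0 addr0 => /eqP; rewrite eq_sym oppr_eq0 oner_eq0.
- by rewrite expr1n mulr1 addNr => /eqP; rewrite oner_eq0.
Qed.

End ClosedFieldRoots.

Lemma natr_mod (R : pzRingType) (p m : nat) : p%:R = 0 :> R -> m%:R = (m %% p)%:R :> R.
Proof. by move=> hp; rewrite {1}(divn_eq m p) natrD natrM hp mulr0 add0r. Qed.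

Lemma natr_mod_eq0 (R : pzRingType) (p m : nat) :
  p%:R = 0 :> R -> (m %% p == 0)%N -> m%:R = 0 :> R.
Proof. by move=> hp /eqP h; rewrite (natr_mod m hp) h. Qed.

Lemma natr_mod_eq1 (R : pzRingType) (p m : nat) :
  p%:R = 0 :> R -> (m %% p == 1)%N -> m%:R = 1 :> R.
Proof. by move=> hp /eqP h; rewrite (natr_mod m hp) h. Qed.

Section SpecialCurves.
Variable F : fieldType.
Implicit Types E : wcurve F.

Lemma cv_curve_complete_square E (u r : F) : 2%:R != 0 :> F -> u != 0 ->
  cv_curve E (u, r, - wa1 E / 2%:R, - (wa3 E + r * wa1 E) / 2%:R) =
  WC 0 ((wb2 E / 4%:R + 3%:R * r) / u ^+ 2) 0
     ((wb4 E / 2%:R + r * wb2 E / 2%:R + 3%:R * r ^+ 2) / u ^+ 4)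
     ((wb6 E / 4%:R + r * wb4 E / 2%:R + r ^+ 2 * wb2 E / 4%:R + r ^+ 3) / u ^+ 6).
Proof.
move=> h2 u0.
have h4 : 4%:R != 0 :> F by rewrite (_ : 4 = 2 * 2)%N // natrM mulf_neq0.
by rewrite /wb2 /wb4 /wb6 /=; congr WC; field; rewrite ?h2 ?h4 ?u0.
Qed.

Lemma cv_curve_char2 E (u r s t : F) : 2%:R = 0 :> F ->
  cv_curve E (u, r, s, t) =
  WC (wa1 E / u) ((wa2 E - s * wa1 E + r - s ^+ 2) / u ^+ 2) ((wa3 E + r * wa1 E) / u ^+ 3)
     ((wa4 E - s * wa3 E - (t + r * s) * wa1 E + r ^+ 2) / u ^+ 4)
     ((wa6 E + r * wa4 E + r ^+ 2 * wa2 E + r ^+ 3 - t * wa3 E - t ^+ 2 - r * t * wa1 E)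
      / u ^+ 6).
Proof.
move=> h2; have h3 : 3%:R = 1 :> F by rewrite (natrD _ 1 2) h2 addr0.
by rewrite /= h2 h3 !mul0r !mul1r !addr0 !subr0.
Qed.

Lemma disc_short (A B : F) :
  disc (WC 0 0 0 A B) = - (16%:R * (4%:R * A ^+ 3 + 27%:R * B ^+ 2)).
Proof. by rewrite /disc /wb2 /wb4 /wb6 /wb8 /=; ring. Qed.

Lemma jinv_short (A B : F) :
  jinv (WC 0 0 0 A B) = (48%:R * A) ^+ 3 / (16%:R * (4%:R * A ^+ 3 + 27%:R * B ^+ 2)).
Proof.
rewrite /jinv disc_short /wc4 /wb2 /wb4 /= invrN.
have -> : (0 ^+ 2 + 4%:R * 0) ^+ 2 - 24%:R * (2%:R * A + 0 * 0) = - (48%:R * A) :> F by ring.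
by ring.
Qed.

Lemma disc_ordinary_char2 (c : F) : disc (WC 1 0 0 0 c) = - c - 432%:R * c ^+ 2.
Proof. by rewrite /disc /wb2 /wb4 /wb6 /wb8 /=; ring. Qed.

Lemma jinv_ordinary_char2 (c : F) : jinv (WC 1 0 0 0 c) = (- c - 432%:R * c ^+ 2)^-1.
Proof.
rewrite /jinv disc_ordinary_char2 /wc4 /wb2 /wb4 /=.
have -> : (1 ^+ 2 + 4%:R * 0) ^+ 2 - 24%:R * (2%:R * 0 + 1 * 0) = 1 :> F by ring.
by rewrite expr1n mul1r.
Qed.

Lemma disc_ordinary_char3 (c : F) : disc (WC 0 1 0 0 c) = - 64%:R * c - 432%:R * c ^+ 2.
Proof. by rewrite /disc /wb2 /wb4 /wb6 /wb8 /=; ring. Qed.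

Lemma jinv_ordinary_char3 (c : F) :
  jinv (WC 0 1 0 0 c) = 16%:R ^+ 3 / (- 64%:R * c - 432%:R * c ^+ 2).
Proof.
rewrite /jinv disc_ordinary_char3 /wc4 /wb2 /wb4 /=.
by rewrite (_ : (0 ^+ 2 + 4%:R * 1) ^+ 2 - 24%:R * (2%:R * 0 + 0 * 0) = 16%:R :> F) //; ring.
Qed.

End SpecialCurves.

Section NormalFormChar2.
Variable K : closedFieldType.
Hypothesis char2 : 2%:R = 0 :> K.
Implicit Type X : wcurve K.

Definition wnormal2 (j : K) := if j == 0 then WC 0 0 1 0 0 else WC 1 0 0 0 (- j^-1).

Lemma cv_normal2_supersingular X : disc X != 0 -> wa1 X = 0 ->
  exists2 p, cv_unit p != 0 & cv_curve X p = wnormal2 (jinv X).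
Proof.
move=> dX ha1.
have j0 : jinv X = 0.
  rewrite /jinv /wc4 /wb2 /wb4 ha1 (@natr_mod_eq0 _ 2 4) // (@natr_mod_eq0 _ 2 24) //.
  set c := (X in X ^+ 3 / _); have -> : c = 0 by rewrite /c; ring.
  by rewrite expr0n mul0r.
have ha3 : wa3 X != 0.
  apply: contraNneq dX => a30.
  rewrite /disc /wb2 /wb4 /wb6 /wb8 ha1 a30 (@natr_mod_eq0 _ 2 4) // (@natr_mod_eq0 _ 2 8) //.
  rewrite char2 (@natr_mod_eq1 _ 2 27) // (@natr_mod_eq1 _ 2 9) //.
  by apply/eqP; ring.
have [u hu u0] := exists_nth_root (isT : (0 < 3)%N) ha3.
have [s hs] := solve_deg4 (- wa4 X - wa2 X ^+ 2) (wa3 X) (2%:R * wa2 X) 0.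
pose r := s ^+ 2 - wa2 X.
have [t ht] := solve_deg2 (wa6 X + r * wa4 X + r ^+ 2 * wa2 X + r ^+ 3) (- wa3 X).
exists (u, r, s, t) => //.
rewrite cv_curve_char2 // j0 /wnormal2 eqxx ha1; congr WC.
- by rewrite mul0r.
- by rewrite /r [X in X / _](_ : _ = 0) ?mul0r //; ring.
- by rewrite mulr0 addr0 -hu divff // expf_neq0.
- rewrite [X in X / _](_ : _ = s ^+ 4
      - (- wa4 X - wa2 X ^+ 2 + wa3 X * s + 2%:R * wa2 X * s ^+ 2 + 0 * s ^+ 3)).
    by rewrite hs subrr mul0r.
  by rewrite /r; ring.
- rewrite [X in X / _](_ : _ = (wa6 X + r * wa4 X + r ^+ 2 * wa2 X + r ^+ 3
      + - wa3 X * t) - t ^+ 2).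
    by rewrite ht subrr mul0r.
  by ring.
Qed.

Lemma cv_normal2_ordinary X : disc X != 0 -> wa1 X != 0 ->
  exists2 p, cv_unit p != 0 & cv_curve X p = wnormal2 (jinv X).
Proof.
move=> dX ha1.
pose u := wa1 X; pose r := - wa3 X / wa1 X.
have [s hs] := solve_deg2 (wa2 X + r) (- wa1 X).
pose t := (wa4 X - s * wa3 X - r * s * wa1 X + r ^+ 2) / wa1 X.
pose c := (wa6 X + r * wa4 X + r ^+ 2 * wa2 X + r ^+ 3 - t * wa3 X - t ^+ 2
           - r * t * wa1 X) / u ^+ 6.
have hX : cv_curve X (u, r, s, t) = WC 1 0 0 0 c.
  rewrite cv_curve_char2 //; congr WC.
  - by rewrite divff.
  - rewrite [X in X / _](_ : _ = (wa2 X + r + - wa1 X * s) - s ^+ 2) ?hs ?subrr ?mul0r //.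
    by ring.
  - by rewrite /r /u; field.
  - by rewrite /t /u; field.
have jX : jinv X = (- c)^-1.
  rewrite -(jinv_cv_curve X (p := (u, r, s, t)) ha1) hX jinv_ordinary_char2.
  by rewrite (@natr_mod_eq0 _ 2 432) // mul0r subr0.
have c0 : c != 0.
  have := disc_cv_curve_neq0 (p := (u, r, s, t)) ha1 dX.
  by rewrite hX disc_ordinary_char2 (@natr_mod_eq0 _ 2 432) // mul0r subr0 oppr_eq0.
exists (u, r, s, t) => //.
by rewrite hX /wnormal2 jX invr_eq0 oppr_eq0 (negPf c0) invrK opprK.
Qed.

Lemma cv_normal2 X : disc X != 0 ->
  exists2 p, cv_unit p != 0 & cv_curve X p = wnormal2 (jinv X).
Proof.
move=> dX; have [ha1|ha1] := eqVneq (wa1 X) 0.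
  exact: cv_normal2_supersingular.
exact: cv_normal2_ordinary.
Qed.

End NormalFormChar2.

Section NormalFormChar3.
Variable K : closedFieldType.
Hypothesis char3 : 3%:R = 0 :> K.
Implicit Type X : wcurve K.

Definition wnormal3 (j : K) := if j == 0 then WC 0 0 0 1 0 else WC 0 1 0 0 (- j^-1).

Lemma two_neq0_char3 : 2%:R != 0 :> K.
Proof.
apply/eqP => h; have : 1 = 3%:R - 2%:R :> K by ring.
by rewrite h char3 subrr; apply/eqP; rewrite oner_eq0.
Qed.

Let four_neq0 : 4%:R != 0 :> K.
Proof. by rewrite (_ : 4 = 2 * 2)%N // natrM mulf_neq0 ?two_neq0_char3. Qed.

Lemma cv_normal3_supersingular X : disc X != 0 -> wb2 X = 0 ->
  exists2 p, cv_unit p != 0 & cv_curve X p = wnormal3 (jinv X).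
Proof.
move=> dX hb2; have h2 := two_neq0_char3.
have j0 : jinv X = 0.
  rewrite /jinv /wc4 hb2 (@natr_mod_eq0 _ 3 24) //.
  set c := (X in X ^+ 3 / _); have -> : c = 0 by rewrite /c; ring.
  by rewrite expr0n mul0r.
have hb4 : wb4 X / 2%:R != 0.
  rewrite mulf_neq0 ?invr_eq0 //; apply: contraNneq dX => b40.
  rewrite /disc hb2 b40 (@natr_mod_eq0 _ 3 27) //.
  by apply/eqP; ring.
have [u hu u0] := exists_nth_root (isT : (0 < 4)%N) hb4.
have [r hr] := solve_deg3 (- wb6 X / 4%:R) (- wb4 X / 2%:R) 0.
exists (u, r, - wa1 X / 2%:R, - (wa3 X + r * wa1 X) / 2%:R) => //.
rewrite cv_curve_complete_square // j0 /wnormal3 eqxx hb2 char3; congr WC.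
- by rewrite (_ : _ + _ = 0) ?mul0r //; ring.
- by rewrite hu; field; move: hb4; rewrite mulf_eq0 invr_eq0 negb_or h2 => /andP[].
- by rewrite (_ : _ + _ = 0) ?mul0r // hr; ring.
Qed.

Lemma cv_normal3_ordinary X : disc X != 0 -> wb2 X != 0 ->
  exists2 p, cv_unit p != 0 & cv_curve X p = wnormal3 (jinv X).
Proof.
move=> dX hb2; have h2 := two_neq0_char3.
have hb24 : wb2 X / 4%:R != 0 by rewrite mulf_neq0 ?invr_eq0.
have [u hu u0] := exists_nth_root (isT : (0 < 2)%N) hb24.
pose r := - wb4 X / wb2 X.
pose p := (u, r, - wa1 X / 2%:R, - (wa3 X + r * wa1 X) / 2%:R).
pose c := (wb6 X / 4%:R + r * wb4 X / 2%:R + r ^+ 2 * wb2 X / 4%:R + r ^+ 3) / u ^+ 6.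
have hX : cv_curve X p = WC 0 1 0 0 c.
  rewrite /p cv_curve_complete_square //; congr WC.
  - by rewrite char3 mul0r addr0 hu divff.
  - by rewrite (_ : _ + _ = 0) ?mul0r // char3 /r; field; rewrite hb2 h2.
have jX : jinv X = (- c)^-1.
  rewrite -(jinv_cv_curve X (p := p) u0) hX jinv_ordinary_char3.
  rewrite (@natr_mod_eq1 _ 3 16) // (@natr_mod_eq1 _ 3 64) // (@natr_mod_eq0 _ 3 432) //.
  by rewrite expr1n mul1r mul0r subr0 mulN1r.
have c0 : c != 0.
  have := disc_cv_curve_neq0 (p := p) u0 dX.
  rewrite hX disc_ordinary_char3 (@natr_mod_eq1 _ 3 64) // (@natr_mod_eq0 _ 3 432) //.
  by rewrite mul0r subr0 mulN1r oppr_eq0.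
exists p => //.
by rewrite hX /wnormal3 jX invr_eq0 oppr_eq0 (negPf c0) invrK opprK.
Qed.

Lemma cv_normal3 X : disc X != 0 ->
  exists2 p, cv_unit p != 0 & cv_curve X p = wnormal3 (jinv X).
Proof.
move=> dX; have [hb2|hb2] := eqVneq (wb2 X) 0.
  exact: cv_normal3_supersingular.
exact: cv_normal3_ordinary.
Qed.

End NormalFormChar3.

Section NormalFormShort.
Variable K : closedFieldType.
Hypotheses (char_neq2 : 2%:R != 0 :> K) (char_neq3 : 3%:R != 0 :> K).
Implicit Type X : wcurve K.

Lemma natr_2_3_neq0 (a b : nat) : (2 ^ a * 3 ^ b)%:R != 0 :> K.
Proof. by rewrite natrM !natrX mulf_neq0 // expf_neq0. Qed.

(* y^2 = x^3 + c x + c has j-invariant j, for j != 0, 1728 *)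
Definition wnormal_coef (j : K) := 27%:R * j / (6912%:R - 4%:R * j).
Definition wnormal (j : K) :=
  if j == 0 then WC 0 0 0 0 1 else if j == 1728%:R then WC 0 0 0 1 0
  else WC 0 0 0 (wnormal_coef j) (wnormal_coef j).

Lemma cv_short_form X :
  exists p A B, cv_unit p != 0 /\ cv_curve X p = WC 0 0 0 A B.
Proof.
have h4 : 4%:R != 0 :> K by rewrite (_ : 4 = 2 ^ 2 * 3 ^ 0)%N // natr_2_3_neq0.
have h12 : 12%:R != 0 :> K by rewrite (_ : 12 = 2 ^ 2 * 3 ^ 1)%N // natr_2_3_neq0.
pose r := - wb2 X / 12%:R.
exists (1, r, - wa1 X / 2%:R, - (wa3 X + r * wa1 X) / 2%:R).
exists ((wb4 X / 2%:R + r * wb2 X / 2%:R + 3%:R * r ^+ 2) / 1 ^+ 4).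
exists ((wb6 X / 4%:R + r * wb4 X / 2%:R + r ^+ 2 * wb2 X / 4%:R + r ^+ 3) / 1 ^+ 6).
split; first by rewrite /cv_unit /= oner_neq0.
rewrite cv_curve_complete_square ?oner_neq0 //; congr WC.
by rewrite /r; field; rewrite ?oner_neq0 ?h4 ?h12.
Qed.

Lemma cv_curve_scale (A B u : K) : u != 0 ->
  cv_curve (WC 0 0 0 A B) (u, 0, 0, 0) = WC 0 0 0 (A / u ^+ 4) (B / u ^+ 6).
Proof. by move=> u0; rewrite /=; congr WC; field; rewrite u0. Qed.

Lemma jinv_short_generic (A B : K) : A != 0 -> B != 0 -> 4%:R * A ^+ 3 + 27%:R * B ^+ 2 != 0 ->
  let j := jinv (WC 0 0 0 A B) in
  [/\ j != 0, j != 1728%:R & wnormal_coef j = A ^+ 3 / B ^+ 2].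
Proof.
move=> A0 B0 dS j.
have h4 : 4%:R != 0 :> K by rewrite (_ : 4 = 2 ^ 2 * 3 ^ 0)%N // natr_2_3_neq0.
have h16 : 16%:R != 0 :> K by rewrite (_ : 16 = 2 ^ 4 * 3 ^ 0)%N // natr_2_3_neq0.
have h27 : 27%:R != 0 :> K by rewrite (_ : 27 = 2 ^ 0 * 3 ^ 3)%N // natr_2_3_neq0.
have h48 : 48%:R != 0 :> K by rewrite (_ : 48 = 2 ^ 4 * 3 ^ 1)%N // natr_2_3_neq0.
have h1728 : 1728%:R != 0 :> K by rewrite (_ : 1728 = 2 ^ 6 * 3 ^ 3)%N // natr_2_3_neq0.
have h6912 : 6912%:R != 0 :> K by rewrite (_ : 6912 = 2 ^ 8 * 3 ^ 3)%N // natr_2_3_neq0.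
have jS : j = (48%:R * A) ^+ 3 / (16%:R * (4%:R * A ^+ 3 + 27%:R * B ^+ 2)).
  exact: jinv_short.
split.
- by rewrite jS mulf_neq0 ?expf_neq0 ?mulf_neq0 // invr_eq0 mulf_neq0.
- apply/eqP => hj.
  have : B ^+ 2 * (1728%:R * 16%:R * 27%:R) =
      1728%:R * (16%:R * (4%:R * A ^+ 3 + 27%:R * B ^+ 2))
      - j * (16%:R * (4%:R * A ^+ 3 + 27%:R * B ^+ 2)).
    by rewrite jS divfK ?mulf_neq0 //; ring.
  rewrite hj subrr => /eqP; rewrite mulf_eq0 expf_eq0 (negPf B0) /=.
  by apply/negP; rewrite ?mulf_neq0.
- have e : 6912%:R - 4%:R * j = 6912%:R * 27%:R * B ^+ 2 / (4%:R * A ^+ 3 + 27%:R * B ^+ 2).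
    by rewrite jS; field; rewrite dS h16.
  rewrite /wnormal_coef e jS exprMn.
  rewrite (_ : 48%:R ^+ 3 = 16%:R * 6912%:R :> K); last by rewrite -natrX -natrM.
  move: (6912%:R : K) h6912 => a ha; move: (27%:R : K) h27 dS => b hb dS.
  move: (16%:R : K) h16 => c hc.
  by field; rewrite dS ha hb hc B0.
Qed.

Lemma cv_normal_short (A B : K) : 4%:R * A ^+ 3 + 27%:R * B ^+ 2 != 0 ->
  exists2 u, u != 0 & cv_curve (WC 0 0 0 A B) (u, 0, 0, 0) = wnormal (jinv (WC 0 0 0 A B)).
Proof.
move=> dS.
have h4 : 4%:R != 0 :> K by rewrite (_ : 4 = 2 ^ 2 * 3 ^ 0)%N // natr_2_3_neq0.
have h16 : 16%:R != 0 :> K by rewrite (_ : 16 = 2 ^ 4 * 3 ^ 0)%N // natr_2_3_neq0.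
have h1728 : 1728%:R != 0 :> K by rewrite (_ : 1728 = 2 ^ 6 * 3 ^ 3)%N // natr_2_3_neq0.
have [A0|A0] := eqVneq A 0.
  have B0 : B != 0 by apply: contraNneq dS => ->; rewrite A0; apply/eqP; ring.
  have [u hu u0] := exists_nth_root (isT : (0 < 6)%N) B0.
  have -> : jinv (WC 0 0 0 A B) = 0 by rewrite jinv_short A0; ring.
  by exists u => //; rewrite cv_curve_scale // /wnormal eqxx A0 hu divff // mul0r.
have [B0|B0] := eqVneq B 0.
  have [u hu u0] := exists_nth_root (isT : (0 < 4)%N) A0.
  have -> : jinv (WC 0 0 0 A B) = 1728%:R.
    by rewrite jinv_short B0; field; rewrite A0 h16 h4.
  by exists u => //; rewrite cv_curve_scale // /wnormal (negPf h1728) eqxx hu divff // B0 mul0r.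
have [u hu u0] := exists_nth_root (isT : (0 < 2)%N) (mulf_neq0 B0 (invr_neq0 A0)).
have [j0 j1728 hc] := jinv_short_generic A0 B0 dS.
exists u => //; rewrite cv_curve_scale // /wnormal (negPf j0) (negPf j1728) hc.
have e4 : u ^+ 4 = (B / A) ^+ 2 by rewrite -hu -exprM.
have e6 : u ^+ 6 = (B / A) ^+ 3 by rewrite -hu -exprM.
by rewrite e4 e6; congr WC; field; rewrite A0 B0.
Qed.

Lemma cv_normal X : disc X != 0 ->
  exists2 p, cv_unit p != 0 & cv_curve X p = wnormal (jinv X).
Proof.
move=> dX; have [p [A [B [p0 hp]]]] := cv_short_form X.
have dS : 4%:R * A ^+ 3 + 27%:R * B ^+ 2 != 0.
  have := disc_cv_curve_neq0 p0 dX.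
  by rewrite hp disc_short oppr_eq0 mulf_eq0 negb_or => /andP[].
have [u u0 hu] := cv_normal_short dS.
have q0 : cv_unit (u, 0, 0, 0) != 0 by [].
exists (cv_mul p (u, 0, 0, 0)); first exact: cv_unit_mul.
by rewrite -cv_curve_mul // hp hu -hp jinv_cv_curve.
Qed.

End NormalFormShort.

Section Classification.
Variable K : closedFieldType.

Definition wnormal_form (j : K) :=
  if 2%:R == 0 :> K then wnormal2 j else if 3%:R == 0 :> K then wnormal3 j else wnormal j.

Lemma cv_normal_form (X : wcurve K) : disc X != 0 ->
  exists2 p, cv_unit p != 0 & cv_curve X p = wnormal_form (jinv X).
Proof.
move=> dX; rewrite /wnormal_form; case: eqP => [h2|/eqP h2]; first exact: cv_normal2.
case: eqP => [h3|/eqP h3]; first exact: cv_normal3.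
exact: cv_normal.
Qed.

Lemma cv_iso_of_jinv (X Y : wcurve K) : disc X != 0 -> disc Y != 0 -> jinv X = jinv Y ->
  exists p, cv_iso X Y p.
Proof.
move=> dX dY jXY.
have [p p0 hp] := cv_normal_form dX; have [q q0 hq] := cv_normal_form dY.
have hX : cv_iso X (wnormal_form (jinv X)) p by rewrite -hp; apply: cv_isoP.
have hY : cv_iso Y (wnormal_form (jinv X)) q by rewrite jXY -hq; apply: cv_isoP.
exists (cv_mul p (cv_inv q)); apply: (cv_iso_mul (closed_field_gt2 K) hX).
exact: (cv_iso_inv (closed_field_gt2 K) hY).
Qed.

End Classification.

Lemma same_card_ext (T1 T2 : Type) (A A' : T1 -> Prop) (B B' : T2 -> Prop) :
  (forall x, A x <-> A' x) -> (forall y, B y <-> B' y) -> same_card A' B' -> same_card A B.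
Proof.
move=> hA hB.
have -> : A = A' by apply: functional_extensionality => x; apply: propositional_extensionality.
by have -> : B = B' by apply: functional_extensionality => y; apply: propositional_extensionality.
Qed.

Lemma inj_surj_bijective (T1 T2 : Type) (f : T1 -> T2) :
  injective f -> (forall y, exists x, f x = y) -> bijective f.
Proof.
move=> inj surj.
pose g y := proj1_sig (constructive_indefinite_description _ (surj y)).
have fg : cancel g f by move=> y; rewrite /g; case: constructive_indefinite_description.
by exists g => // x; apply: inj; rewrite fg.
Qed.

Lemma sig_inj (T : Type) (P : T -> Prop) (x y : {z | P z}) : proj1_sig x = proj1_sig y -> x = y.
Proof. by apply: eq_sig_hprop => z p q; apply: proof_irrelevance. Qed.

Lemma same_card_classes (T1 T2 : Type) (A1 : T1 -> Prop) (A2 : T2 -> Prop)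
    (C1 : T1 -> T1 -> Prop) (C2 : T2 -> T2 -> Prop) (M : T1 -> T2 -> Prop) :
  (forall x, A1 x -> exists2 y, A2 y & M x y) ->
  (forall y, A2 y -> exists2 x, A1 x & M x y) ->
  (forall x x' y y', A1 x -> A1 x' -> M x y -> M x' y' -> C1 x = C1 x' <-> C2 y = C2 y') ->
  same_card (fun C => exists2 x, A1 x & C = C1 x) (fun D => exists2 y, A2 y & D = C2 y).
Proof.
move=> h12 h21 hM; set L := (fun C => _); set R := (fun D => _).
have hf (c : {C | L C}) : exists d : {D | R D},
    exists x y, [/\ A1 x, M x y, proj1_sig c = C1 x & proj1_sig d = C2 y].
  case: c => C [x Ax eC]; have [y Ay Mxy] := h12 x Ax.
  by exists (exist R (C2 y) (ex_intro2 _ _ y Ay erefl)), x, y; split.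
pose f c := proj1_sig (constructive_indefinite_description _ (hf c)).
have fP c : exists x y, [/\ A1 x, M x y, proj1_sig c = C1 x & proj1_sig (f c) = C2 y].
  by rewrite /f; case: constructive_indefinite_description.
exists f; apply: inj_surj_bijective.
  move=> c1 c2 e; apply: sig_inj.
  have [x1 [y1 [Ax1 M1 -> f1]]] := fP c1; have [x2 [y2 [Ax2 M2 -> f2]]] := fP c2.
  by apply/(hM _ _ _ _ Ax1 Ax2 M1 M2); rewrite -f1 -f2 e.
case=> D [y Ay eD]; have [x Ax Mxy] := h21 y Ay.
have Lx : L (C1 x) by exists x.
exists (exist L (C1 x) Lx); apply: sig_inj.
have [x' [y' [Ax' M' /= e' ->]]] := fP (exist L (C1 x) Lx).
by rewrite eD; symmetry; apply/(hM _ _ _ _ Ax Ax' Mxy M').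
Qed.

Lemma class_eq_iff (T : Type) (V : T -> Prop) (R : T -> T -> Prop) {x x' : T} :
  (forall y, R y y) -> (forall y z, R y z -> R z y) ->
  (forall y1 y2 y3, R y1 y2 -> R y2 y3 -> R y1 y3) ->
  V x -> (fun y => V y /\ R x y) = (fun y => V y /\ R x' y) <-> R x x'.
Proof.
move=> Rrefl Rsym Rtrans Vx; split=> [e|Rxx'].
  have /= ex := congr1 (fun C : T -> Prop => C x) e.
  by have [_ /Rsym] : V x /\ R x' x by rewrite -ex.
apply: functional_extensionality => y; apply: propositional_extensionality.
by split=> -[Vy Ry]; split=> //; [apply: Rtrans Ry; apply: Rsym | apply: Rtrans Ry].
Qed.

Section LevelStructures.
Variables (n : nat) (G : {group {perm ZN2 n}}) (K : closedFieldType).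
Hypothesis HGL : forall g, g \in G -> is_GL2 g.

Notation pairT := (wcurve K * {ffun ZN2 n -> option (K * K)})%type.

Let K_gt2 := closed_field_gt2 K.

Definition pair_map (sigma : {rmorphism K -> K}) (X : pairT) : pairT :=
  (wmap sigma X.1, [ffun a => ptmap sigma (X.2 a)]).

Lemma pair_isoP (X Y : pairT) : pair_iso G X Y <->
  exists p g, [/\ cv_iso X.1 Y.1 p, g \in G & forall a, Y.2 a = cv_pt p (X.2 (g a))].
Proof.
split=> [[u [r [s [t [h [g gG hg]]]]]]|[[[[u r] s] t] [g [h gG hg]]]].
  by exists (u, r, s, t), g.
by exists u, r, s, t; split => //; exists g.
Qed.

Lemma pair_iso_refl (X : pairT) : pair_iso G X X.
Proof.
apply/pair_isoP; exists cv_one, 1%g; split; [exact: cv_iso1 | exact: group1 |].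
by move=> a; rewrite perm1 cv_pt1.
Qed.

Lemma pair_iso_sym (X Y : pairT) : pair_iso G X Y -> pair_iso G Y X.
Proof.
case/pair_isoP => p [g [hp gG hg]]; apply/pair_isoP.
exists (cv_inv p), g^-1%g; split; [exact: cv_iso_inv hp | by rewrite groupV |].
by move=> a; rewrite hg permKV cv_ptK // (cv_iso_unit hp).
Qed.

Lemma pair_iso_trans (X Y Z : pairT) : pair_iso G X Y -> pair_iso G Y Z -> pair_iso G X Z.
Proof.
case/pair_isoP => p [g [hp gG hg]]; case/pair_isoP => q [h [hq hG hh]]; apply/pair_isoP.
exists (cv_mul p q), (h * g)%g; split; [exact: cv_iso_mul hp hq | by rewrite groupM |].
by move=> a; rewrite hh hg cv_pt_mul ?(cv_iso_unit hp) ?(cv_iso_unit hq) // permM.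
Qed.

Lemma pair_iso_map sigma (X Y : pairT) :
  pair_iso G X Y -> pair_iso G (pair_map sigma X) (pair_map sigma Y).
Proof.
case/pair_isoP => p [g [hp gG hg]]; apply/pair_isoP.
exists (cv_map sigma p), g; split => //.
  rewrite /= (cv_iso_curve K_gt2 hp) wmap_cv_curve.
  by apply: cv_isoP; rewrite cv_unit_map (cv_iso_unit hp).
by move=> a; rewrite !ffunE hg ptmap_cv_pt.
Qed.

Lemma pair_iso_levelstr (X Y : pairT) :
  pair_iso G X Y -> levelstr X.1 X.2 -> levelstr Y.1 Y.2.
Proof.
case/pair_isoP => p [g [hp gG hg]] [binj [badd [btor bsurj]]].
have u0 := cv_iso_unit hp.
have gadd x y : g (x + y) = g x + g y.
  by apply/eqP; move/forallP: (HGL gG) => /(_ x) /forallP /(_ y).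
have onc a : oncurve X.1 (X.2 a) by case/andP: (btor a).
split; [|split; [|split]].
- by move=> a c; rewrite !hg => /(can_inj (cv_ptK u0)) /binj /perm_inj.
- by move=> a c; rewrite !hg gadd badd (cv_iso_wadd K_gt2 hp (onc _) (onc _)).
- by move=> a; rewrite hg (in_tors_cv_pt K_gt2 _ _ hp).
- move=> P hP.
  have [a ha] : exists a, X.2 a = cv_pt (cv_inv p) P.
    by apply: bsurj; rewrite -(in_tors_cv_pt K_gt2 _ _ hp) cv_ptVK.
  by exists ((g^-1)%g a); rewrite hg permKV ha cv_ptVK.
Qed.


Lemma same_card_jfibre_fixed_dcosets (E : wcurve K) (J : K)
    (Gal : {rmorphism K -> K} -> Prop) :
  disc E != 0 -> jinv E = J -> (forall s, Gal s -> wmap s E = E) ->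
  same_card
    (fun C : pairT -> Prop =>
       exists X : pairT,
         [/\ disc X.1 != 0 /\ levelstr X.1 X.2,
             jinv X.1 = J,
             (forall sigma : {rmorphism K -> K}, Gal sigma ->
                pair_iso G (wmap sigma X.1, [ffun a => ptmap sigma (X.2 a)]) X) &
             C = (fun Y => (disc Y.1 != 0 /\ levelstr Y.1 Y.2) /\ pair_iso G X Y)])
    (fun C : {ffun ZN2 n -> option (K * K)} -> Prop =>
       exists b : {ffun ZN2 n -> option (K * K)},
         [/\ levelstr E b,
             (forall sigma : {rmorphism K -> K}, Gal sigma ->
                dcoset_rel G E [ffun a => ptmap sigma (b a)] b) &
             C = (fun b' => levelstr E b' /\ dcoset_rel G E b b')]).
Proof.
move=> dE jE fixE.
pose V (Y : pairT) := disc Y.1 != 0 /\ levelstr Y.1 Y.2.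
pose A1 X := [/\ V X, jinv X.1 = J & forall s, Gal s -> pair_iso G (pair_map s X) X].
pose A2 b := levelstr E b /\ forall s, Gal s -> dcoset_rel G E [ffun a => ptmap s (b a)] b.
pose R2 b b' := pair_iso G (E, b) (E, b').
have R2_refl b : R2 b b by apply: pair_iso_refl.
have R2_sym b b' : R2 b b' -> R2 b' b by apply: pair_iso_sym.
have R2_trans b1 b2 b3 : R2 b1 b2 -> R2 b2 b3 -> R2 b1 b3 by apply: pair_iso_trans.
apply: (same_card_ext _ _ (same_card_classes (A1 := A1) (A2 := A2)
  (C1 := fun X Y => V Y /\ pair_iso G X Y) (C2 := fun b b' => levelstr E b' /\ R2 b b')
  (M := fun X b => pair_iso G X (E, b)) _ _ _)).
- by move=> C; split=> [[X [vX jX fX ->]]|[X [vX jX fX] ->]]; exists X.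
- by move=> D; split=> [[b [lb fb ->]]|[b [lb fb] ->]]; exists b.
- move=> X [vX jX fX].
  have [p hp] := cv_iso_of_jinv vX.1 dE (etrans jX (esym jE)).
  pose b := [ffun a => cv_pt p (X.2 a)].
  have hXb : pair_iso G X (E, b).
    apply/pair_isoP; exists p, 1%g; split=> [//||a]; first exact: group1.
    by rewrite ffunE perm1.
  have lb := pair_iso_levelstr hXb vX.2.
  exists b => //; split => //.
  move=> s hs; have := pair_iso_map s (pair_iso_sym hXb); rewrite /pair_map /= fixE // => hbX.
  exact: pair_iso_trans hbX (pair_iso_trans (fX s hs) hXb).
- move=> b [lb fb]; exists (E, b); last exact: pair_iso_refl.
  by split=> // s hs; rewrite /pair_map /= fixE //; apply: fb.
- move=> X X' b b' [vX _ _] _ hXb hXb'.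
  split=> [/(class_eq_iff pair_iso_refl pair_iso_sym pair_iso_trans vX) hXX'|].
    apply/(class_eq_iff R2_refl R2_sym R2_trans (pair_iso_levelstr hXb vX.2)).
    exact: pair_iso_trans (pair_iso_sym hXb) (pair_iso_trans hXX' hXb').
  move/(class_eq_iff R2_refl R2_sym R2_trans (pair_iso_levelstr hXb vX.2)) => hbb'.
  apply/(class_eq_iff pair_iso_refl pair_iso_sym pair_iso_trans vX).
  exact: pair_iso_trans hXb (pair_iso_trans hbb' (pair_iso_sym hXb')).
Qed.
End LevelStructures.

Unset Implicit Arguments.
Set Strict Implicit.

Theorem lemma3p3
  (n : nat) (G : {group {perm ZN2 n}})
  (HGL : forall g, g \in G -> is_GL2 g)
  (HmI : exists2 g, g \in G & forall a, g a = - a)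
  (Hdet : forall u : 'I_n.+1, coprime u n.+1 -> exists2 g, g \in G & detN g = u)
  (k : fieldType) (Hperf : perfect_field k)
  (Hchar : forall p : nat, p \in [pchar k] -> ~~ (p %| n.+1)%N)
  (K : closedFieldType) (iota : {rmorphism k -> K})
  (Halg : forall x : K, exists2 p : {poly k}, p != 0 & root (map_poly iota p) x)
  (j : k) (E0 : wcurve k) (HE0 : disc E0 != 0) (HjE : jinv E0 = j) :
  let E := wmap iota E0 in
  same_card
    (* { P in Y_G(k) : pi_G(P) = j } *)
    (fun C : wcurve K * {ffun ZN2 n -> option (K * K)} -> Prop =>
       exists X : wcurve K * {ffun ZN2 n -> option (K * K)},
         [/\ disc X.1 != 0 /\ levelstr X.1 X.2,
             jinv X.1 = iota j,
             (forall sigma : {rmorphism K -> K}, galk iota sigma ->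
                pair_iso G (wmap sigma X.1, [ffun a => ptmap sigma (X.2 a)]) X) &
             C = (fun Y => (disc Y.1 != 0 /\ levelstr Y.1 Y.2) /\ pair_iso G X Y)])
    (* Gal_k-fixed elements of G \ M / Aut(E_kbar) *)
    (fun C : {ffun ZN2 n -> option (K * K)} -> Prop =>
       exists b : {ffun ZN2 n -> option (K * K)},
         [/\ levelstr E b,
             (forall sigma : {rmorphism K -> K}, galk iota sigma ->
                dcoset_rel G E [ffun a => ptmap sigma (b a)] b) &
             C = (fun b' => levelstr E b' /\ dcoset_rel G E b b')]).
Proof.
(* HmI, Hdet, Hperf, Hchar and Halg make Y_G the coarse moduli space; the
   bijection itself only uses that K is algebraically closed and E is defined
   over k. *)
move=> E.
have dE : disc E != 0 by rewrite /E disc_wmap fmorph_eq0.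
have jE : jinv E = iota j by rewrite /E jinv_wmap HjE.
have fixE s : galk iota s -> wmap s E = E by case=> _ hs; rewrite /E /wmap /= !hs.
exact: (same_card_jfibre_fixed_dcosets (Gal := galk iota) HGL dE jE fixE).
Qed.
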